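(* Let $V$ be a finite set, $C=(C_R)_{R\subseteq V}$ non-negative capacities and $D=(D_S)_{S\subseteq V}$ non-negative demands. Then \[ \mathrm{MaxHSP}(V,C,D)=\min_{\delta\in\Delta(V)}\frac{C\cdot\delta}{D\cdot\delta}, \] where $\Delta(V)$ is the set of all diversities on $V$. Moreover, the minimum is attained by a diversity $\delta$ supported on the hypergraph $H=(V,E)$ with $E=\{e\subseteq V: C_e>0\}$.
   Context: A diversity on $V$ is a function $\delta$ from subsets of $V$ to $\mathbb{R}$ with $\delta(A)\ge 0$, $\delta(A)=0$ whenever $|A|\le 1$ (values $0$ on larger sets are allowed), and $\delta(A\cup B)+\delta(B\cup C)\ge\delta(A\cup C)$ whenever $B\neq\emptyset$. Write $C\cdot\delta=\sum_{R\subseteq V}C_R\delta(R)$ and $D\cdot\delta=\sum_{S\subseteq V}D_S\delta(S)$; the quotient is considered for $\delta$ with $D\cdot\delta>0$. All subsets $R\subseteq V$ are regarded as hyperedges with capacity $C_R$. For $S\subseteq V$, $\mathcal{T}_S$ is the set of minimal connected sub-hypergraphs (sets $t$ of hyperedges, connected, whose union contains $S$, minimal with this property). $\mathrm{MaxHSP}(V,C,D)$ is the optimal value of the LP: maximize $f$ subject to $\sum_{S}\sum_{t\in\mathcal{T}_S:R\in t}z_{t,S}\le C_R$ for all $R\subseteq V$, $\sum_{t\in\mathcal{T}_S}z_{t,S}=f\cdot D_S$ for all $S\subseteq V$, $z_{t,S}\ge0$. Given a hypergraph $H=(V,E)$ and non-negative weights $w$ on $E$, the hypergraph Steiner diversity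 is $\delta(A)=\min\{\sum_{e\in E'}w(e):E'\subseteq E \text{ induces a connected sub-hypergraph containing } A\}$; a diversity is supported on $H$ if it is the hypergraph Steiner diversity of $H$ for some non-negative weights on $E$.
   Formalization: Attainment of the minimum by a diversity supported on $H=(V,E)$ is claimed only when some diversity is supported on H, that is, when H is connected and its hyperedges cover V. The statement above fails without it. *)

From HB Require Import structures.
From mathcomp Require Import all_boot all_order all_algebra.
From mathcomp Require Import reals.
Set Implicit Arguments. Unset Strict Implicit. Unset Printing Implicit Defensive.
Import Order.TTheory GRing.Theory Num.Theory.
Local Open Scope ring_scope.

Section HSP.
Variables (V : finType) (R : realType).

Definition diversity (delta : {set V} -> R) : Prop :=
  [/\ (forall A, 0 <= delta A),
      (forall A : {set V}, (#|A| <= 1)%N -> delta A = 0) &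
      (forall A B C : {set V}, B != set0 ->
          delta (A :|: C) <= delta (A :|: B) + delta (B :|: C))].

Definition dotp (C delta : {set V} -> R) : R := \sum_(A : {set V}) C A * delta A.

Definition hadj (t : {set {set V}}) : rel {set V} :=
  fun e f => [&& e \in t, f \in t & ~~ [disjoint e & f]].

Definition hconnected (t : {set {set V}}) : bool :=
  [forall e1 in t, forall e2 in t, connect (hadj t) e1 e2].

(* t induces a connected sub-hypergraph containing S.  Convention: the empty
   set of hyperedges (the trivial sub-hypergraph on a single vertex) contains
   exactly the sets S with |S| <= 1. *)
Definition connects (t : {set {set V}}) (S : {set V}) : bool :=
  if t == set0 then (#|S| <= 1)%N
  else hconnected t && (S \subset \bigcup_(e in t) e).

Definition minimal_tree (S : {set V}) (t : {set {set V}}) : bool :=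
  connects t S && [forall t' : {set {set V}}, (t' \proper t) ==> ~~ connects t' S].

Definition HSP_feasible (C D : {set V} -> R) (f : R) : Prop :=
  exists z : {set {set V}} -> {set V} -> R,
  [/\ (forall t S, 0 <= z t S),
      (forall Re : {set V},
          \sum_(S : {set V}) \sum_(t : {set {set V}} | minimal_tree S t && (Re \in t)) z t S
            <= C Re) &
      (forall S : {set V}, \sum_(t : {set {set V}} | minimal_tree S t) z t S = f * D S)].

Definition is_MaxHSP (C D : {set V} -> R) (m : R) : Prop :=
  HSP_feasible C D m /\ (forall f, HSP_feasible C D f -> f <= m).

(* delta is the hypergraph Steiner diversity of the hypergraph (V,E)
   for some nonnegative weights w on E. *)
Definition supported_on (E : {set {set V}}) (delta : {set V} -> R) : Prop :=
  exists w : {set V} -> R,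
    (forall e, e \in E -> 0 <= w e) /\
    (forall A : {set V},
       (exists2 E' : {set {set V}}, (E' \subset E) && connects E' A &
                                   delta A = \sum_(e in E') w e) /\
       (forall E' : {set {set V}}, E' \subset E -> connects E' A ->
                                   delta A <= \sum_(e in E') w e)).

End HSP.

From HB Require Import structures.
From mathcomp Require Import all_boot all_order all_algebra.
From mathcomp Require Import reals.
From mathcomp Require Import ring lra.
Set Implicit Arguments. Unset Strict Implicit. Unset Printing Implicit Defensive.
Import Order.TTheory GRing.Theory Num.Theory.
Local Open Scope ring_scope.

(* The value of MaxHSP is the optimum of a finite linear program, so LP
   duality (derived from Farkas' lemma, proved by Fourier-Motzkin elimination)
   applies.  A dual solution consists of weights [w >= 0] on hyperedges and
   values [u S] with [u S <= w(t)] for every minimal connected [t] covering [S]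
   and [sum_S D S * u S >= 1]; the hypergraph Steiner diversity of [w] dominates
   [u] and is at most [w e] on each hyperedge [e], so its ratio [C.d / D.d] is
   at most the dual optimum.  Conversely a diversity is subadditive along
   connected sets of hyperedges, which gives weak duality [f * D.d <= C.d].
   Finally, the Steiner diversity on the hyperedges with [C e > 0] weighted by
   an optimal diversity [d] dominates [d] and agrees with it where [C] is
   positive, so it is optimal as well. *)
Section LinearInequalities.
Variable R : realFieldType.

Lemma sumr_delta_l (I : finType) (i0 : I) (c : R) (F : I -> R) :
  \sum_i (if i == i0 then c else 0) * F i = c * F i0.
Proof.
by rewrite (bigD1 i0) //= eqxx big1 ?addr0 // => i /negbTE ->; rewrite mul0r.
Qed.

Lemma sumr_delta_r (I : finType) (i0 : I) (c : R) (F : I -> R) :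
  \sum_i F i * (if i == i0 then c else 0) = F i0 * c.
Proof. by under eq_bigr do rewrite mulrC; rewrite sumr_delta_l mulrC. Qed.

Lemma sum_unit (F : unit -> R) : \sum_u F u = F tt.
Proof. by rewrite (big_pred1 tt) // => -[]. Qed.

Lemma sum_pair (I J : finType) (F : I * J -> R) : \sum_p F p = \sum_i \sum_j F (i, j).
Proof. by rewrite pair_bigA; apply: eq_bigr => -[]. Qed.

Lemma sumr_mulA (I J : finType) (a : J -> I -> R) (u : J -> R) (v : I -> R) :
  \sum_j u j * (\sum_i a j i * v i) = \sum_i (\sum_j u j * a j i) * v i.
Proof.
under eq_bigr do rewrite mulr_sumr.
rewrite exchange_big /=; apply: eq_bigr => i _; rewrite mulr_suml.
by apply: eq_bigr => j _; rewrite mulrA.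
Qed.

Lemma sumr_mul_le (I J : finType) (a : J -> I -> R) (x : I -> R) (y : J -> R)
    (p : J -> R) (q : I -> R) :
  (forall i, 0 <= x i) -> (forall j, 0 <= y j) ->
  (forall j, \sum_i a j i * x i <= p j) -> (forall i, q i <= \sum_j y j * a j i) ->
  \sum_i q i * x i <= \sum_j y j * p j.
Proof.
move=> x0 y0 hp hq; apply: (@le_trans _ _ (\sum_j y j * \sum_i a j i * x i)).
  by rewrite sumr_mulA; apply: ler_sum => i _; apply: ler_wpM2r.
by apply: ler_sum => j _; apply: ler_wpM2l.
Qed.

Definition ineq_solvable (I J : finType) (a : J -> I -> R) (b : J -> R) :=
  exists x : I -> R, forall j, \sum_i a j i * x i <= b j.

Definition farkas_certificate (I J : finType) (a : J -> I -> R) (b : J -> R) :=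
  exists l : J -> R, [/\ forall j, 0 <= l j, forall i, \sum_j l j * a j i = 0
                       & \sum_j l j * b j < 0].

Lemma exists_between (T : finType) (P Q : pred T) (lo hi : T -> R) :
  (forall l u, P l -> Q u -> lo l <= hi u) ->
  exists v, (forall l, P l -> lo l <= v) /\ (forall u, Q u -> v <= hi u).
Proof.
move=> lohi; case: (pickP P) => [l0 Pl0|noP].
  case: (arg_maxP lo Pl0) => l Pl maxl; exists (lo l); split=> // u Qu.
  exact: lohi.
case: (pickP Q) => [u0 Qu0|noQ].
  by case: (arg_minP hi Qu0) => u Qu minu; exists (hi u); split=> // l; rewrite noP.
by exists 0; split=> x; rewrite ?noP ?noQ.
Qed.

Lemma farkas_zero (I J : finType) (a : J -> I -> R) (b : J -> R) :
  (forall j i, a j i = 0) -> ineq_solvable a b \/ farkas_certificate a b.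
Proof.
move=> a0; case: (boolP [forall j, 0 <= b j]) => [/forallP b0|].
  by left; exists (fun _ => 0) => j; rewrite big1 // => i _; rewrite mulr0.
rewrite negb_forall => /existsP [j0]; rewrite -ltNge => bj0.
right; exists (fun j => if j == j0 then 1 else 0); split.
- by move=> j; case: ifP.
- by move=> i; rewrite sumr_delta_l a0 mulr0.
- by rewrite sumr_delta_l mul1r.
Qed.

Section FourierMotzkin.
Variables (I J : finType) (a : J -> I -> R) (b : J -> R) (k : I).

(* The rows of the system with variable [k] eliminated: every row [j] with
   [a j k = 0], and for each pair [(p, q)] with [a p k > 0 > a q k] the
   combination [- a q k * row p + a p k * row q]. *)
Definition fm_coef (r : J + J * J) (j : J) : R :=
  match r with
  | inl j0 => if a j0 k == 0 then (if j == j0 then 1 else 0) else 0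
  | inr (p, q) => if (0 < a p k) && (a q k < 0) then
       (if j == p then - a q k else 0) + (if j == q then a p k else 0) else 0
  end.

Definition fm_a r i := \sum_j fm_coef r j * a j i.
Definition fm_b r := \sum_j fm_coef r j * b j.

Lemma fm_coef_ge0 r j : 0 <= fm_coef r j.
Proof.
case: r => [j0|[p q]] /=; first by case: ifP => //; case: ifP.
case: ifP => // /andP [hp hq]; apply: addr_ge0; case: ifP => // _.
  by rewrite oppr_ge0 ltW.
by rewrite ltW.
Qed.

Lemma sum_fm_coef_inl j0 (F : J -> R) :
  \sum_j fm_coef (inl j0) j * F j = if a j0 k == 0 then F j0 else 0.
Proof.
rewrite /=; case: ifP => _; first by rewrite sumr_delta_l mul1r.
by rewrite big1 // => j _; rewrite mul0r.
Qed.

Lemma sum_fm_coef_inr p q (F : J -> R) :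
  \sum_j fm_coef (inr (p, q)) j * F j =
  if (0 < a p k) && (a q k < 0) then - a q k * F p + a p k * F q else 0.
Proof.
rewrite /=; case: ifP => _; last by rewrite big1 // => j _; rewrite mul0r.
by under eq_bigr do rewrite mulrDl; rewrite big_split /= !sumr_delta_l.
Qed.

Lemma fm_a_eliminated r : fm_a r k = 0.
Proof.
rewrite /fm_a; case: r => [j0|[p q]]; first by rewrite sum_fm_coef_inl; case: eqP.
by rewrite sum_fm_coef_inr; case: ifP => // _; ring.
Qed.

Lemma fm_solution : ineq_solvable fm_a fm_b -> ineq_solvable a b.
Proof.
case=> x' hx'; pose x0 i := if i == k then 0 else x' i.
pose s j := \sum_i a j i * x0 i.
have comb r : \sum_j fm_coef r j * s j <= fm_b r.
  apply: le_trans (hx' r); rewrite sumr_mulA; apply: ler_sum => i _.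
  by rewrite /x0; case: eqP => [->|//]; rewrite -/(fm_a r k) fm_a_eliminated !mul0r.
(* Each lower bound on the value of variable [k] is below each upper bound. *)
have [v [lo hi]] : exists v,
    (forall l, a l k < 0 -> (s l - b l) / (- a l k) <= v) /\
    (forall u, 0 < a u k -> v <= (b u - s u) / a u k).
  apply: exists_between => l u hl hu; have := comb (inr (u, l)).
  rewrite sum_fm_coef_inr /fm_b sum_fm_coef_inr hl hu /= => h.
  rewrite ler_pdivlMr // mulrAC ler_pdivrMr ?oppr_gt0 //; nra.
exists (fun i => if i == k then v else x' i) => j.
have -> : \sum_i a j i * (if i == k then v else x' i) = s j + a j k * v.
  rewrite /s -sumr_delta_r -big_split /=; apply: eq_bigr => i _.
  by rewrite /x0 -mulrDr; case: eqP => _; rewrite ?add0r ?addr0.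
case: (ltgtP (a j k) 0) => hj.
- by have := lo j hj; rewrite ler_pdivrMr ?oppr_gt0 //; nra.
- by have := hi j hj; rewrite ler_pdivlMr //; nra.
- by have := comb (inl j); rewrite sum_fm_coef_inl /fm_b sum_fm_coef_inl hj eqxx mul0r addr0.
Qed.

Lemma fm_certificate : farkas_certificate fm_a fm_b -> farkas_certificate a b.
Proof.
case=> l [l0 la lb]; exists (fun j => \sum_r l r * fm_coef r j); split.
- by move=> j; apply: sumr_ge0 => r _; apply: mulr_ge0 => //; apply: fm_coef_ge0.
- by move=> i; rewrite -sumr_mulA; apply: la.
- by rewrite -sumr_mulA; apply: lb.
Qed.

End FourierMotzkin.

Lemma farkas_lemma (I J : finType) (a : J -> I -> R) (b : J -> R) :
  ineq_solvable a b \/ farkas_certificate a b.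
Proof.
suff: forall n (X : {set I}), (#|X| <= n)%N -> forall (J : finType) (a : J -> I -> R) b,
    (forall j i, i \notin X -> a j i = 0) -> ineq_solvable a b \/ farkas_certificate a b.
  by move/(_ _ [set: I] (leqnn _) J a b); apply=> j i; rewrite in_setT.
elim=> [|n IH] X cardX {}J {}a {}b suppX.
  apply: farkas_zero => j i; apply: suppX.
  by move: cardX; rewrite leqn0 cards_eq0 => /eqP ->; rewrite in_set0.
case: (set_0Vmem X) => [X0|[k kX]].
  by apply: farkas_zero => j i; apply: suppX; rewrite X0 in_set0.
have cardXk : (#|X :\ k| <= n)%N by move: cardX; rewrite (cardsD1 k X) kX add1n ltnS.
have suppXk r i : i \notin X :\ k -> fm_a a k r i = 0.
  rewrite in_setD1 negb_and negbK => /orP [/eqP ->|iX]; first exact: fm_a_eliminated.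
  by rewrite /fm_a big1 // => j _; rewrite suppX // mulr0.
case: (IH _ cardXk _ _ (fm_b a b k) suppXk) => [/fm_solution|/fm_certificate]; by [left|right].
Qed.

Lemma farkas_lemma_nonneg (I J : finType) (a : J -> I -> R) (b : J -> R) :
  (exists x : I -> R, (forall i, 0 <= x i) /\ forall j, \sum_i a j i * x i <= b j) \/
  (exists l : J -> R, [/\ forall j, 0 <= l j, forall i, 0 <= \sum_j l j * a j i
                       & \sum_j l j * b j < 0]).
Proof.
(* add the rows [- x i <= 0] *)
pose a' (r : J + I) i := match r with inl j => a j i | inr i' => if i == i' then -1 else 0 end.
pose b' (r : J + I) := match r with inl j => b j | inr _ => 0 end.
case: (farkas_lemma a' b') => [[x hx]|[l [l0 la lb]]].
- left; exists x; split=> [i|j]; last exact: hx (inl j).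
  by have := hx (inr i); rewrite /= sumr_delta_l; lra.
- right; exists (fun j => l (inl j)); split=> [j|i|]; first exact: l0.
    have := la i; rewrite big_sumType /=.
    under [X in _ + X]eq_bigr do rewrite eq_sym.
    by rewrite sumr_delta_r => h; have := l0 (inr i); lra.
  by move: lb; rewrite big_sumType /= [X in _ + X]big1 ?addr0 // => i _; rewrite mulr0.
Qed.

Lemma lp_weak_duality_cone (I J : finType) (a : J -> I -> R) (b : J -> R) (c : I -> R)
    (x : I -> R) (y : J -> R) (al : J -> R) (be : I -> R) (la : R) :
  (forall i, 0 <= x i) -> (forall j, \sum_i a j i * x i <= b j) ->
  (forall j, 0 <= y j) -> (forall i, c i <= \sum_j y j * a j i) ->
  (forall j, 0 <= al j) -> (forall i, 0 <= be i) -> 0 <= la ->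
  (forall i, la * c i <= \sum_j al j * a j i) ->
  (forall j, \sum_i a j i * be i <= la * b j) ->
  \sum_i c i * be i <= \sum_j al j * b j.
Proof.
move=> x0 ax y0 ya al0 be0 la0 al_a a_be.
move: la0; rewrite le_eqVlt => /orP [/eqP la_eq0|la_pos]; last first.
  rewrite -(ler_pM2l la_pos) !mulr_sumr; under eq_bigr do rewrite mulrA.
  under [X in _ <= X]eq_bigr do rewrite mulrCA.
  by apply: sumr_mul_le => // j; rewrite -mulrA.
(* with [la = 0], [(al, be)] is a ray along which neither program improves *)
have al_b : 0 <= \sum_j al j * b j.
  have := sumr_mul_le x0 al0 ax al_a.
  by rewrite -la_eq0 big1 // => i _; rewrite !mul0r.
have c_be : \sum_i c i * be i <= 0.
  have := sumr_mul_le be0 y0 a_be ya.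
  by rewrite -la_eq0 [X in _ <= X]big1 // => j _; rewrite mul0r mulr0.
exact: le_trans c_be al_b.
Qed.

Lemma lp_duality (I J : finType) (a : J -> I -> R) (b : J -> R) (c : I -> R) :
  (exists x, (forall i, 0 <= x i) /\ forall j, \sum_i a j i * x i <= b j) ->
  (exists y, (forall j, 0 <= y j) /\ forall i, c i <= \sum_j y j * a j i) ->
  exists x y, [/\ forall i, 0 <= x i, forall j, \sum_i a j i * x i <= b j,
     forall j, 0 <= y j, forall i, c i <= \sum_j y j * a j i &
     \sum_j y j * b j <= \sum_i c i * x i].
Proof.
move=> [x0 [x00 ax0]] [y0 [y00 y0a]].
(* the primal and dual constraints together with [y . b <= c . x],
   in the variables [(x, y) >= 0] *)
pose a' (r : J + (I + unit)) (v : I + J) : R :=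
  match r, v with
  | inl j, inl i => a j i
  | inr (inl i), inr j => - a j i
  | inr (inr _), inl i => - c i
  | inr (inr _), inr j => b j
  | _, _ => 0
  end.
pose b' (r : J + (I + unit)) : R :=
  match r with inl j => b j | inr (inl i) => - c i | inr (inr _) => 0 end.
case: (farkas_lemma_nonneg a' b') => [[w [w0 hw]]|[l [l0 la lb]]].
  exists (fun i => w (inl i)), (fun j => w (inr j)); split=> [i|j|j|i|].
  - exact: w0.
  - move: (hw (inl j)); rewrite big_sumType /= [X in _ + X]big1 ?addr0 // => ? _.
    by rewrite mul0r.
  - exact: w0.
  - move: (hw (inr (inl i))); rewrite big_sumType /= big1 ?add0r => [|? _]; last first.
      by rewrite mul0r.
    by under eq_bigr do rewrite mulNr mulrC; rewrite sumrN lerN2.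
  - move: (hw (inr (inr tt))); rewrite big_sumType /=.
    under eq_bigr do rewrite mulNr; rewrite sumrN.
    by under [X in _ + X]eq_bigr do rewrite mulrC; lra.
have col_x i : l (inr (inr tt)) * c i <= \sum_j l (inl j) * a j i.
  move: (la (inl i)); rewrite !big_sumType /= sum_unit.
  rewrite [X in _ + (X + _)]big1 ?add0r => [|? _]; last by rewrite mulr0.
  by rewrite mulrN; lra.
have col_y j : \sum_i a j i * l (inr (inl i)) <= l (inr (inr tt)) * b j.
  move: (la (inr j)); rewrite !big_sumType /= sum_unit.
  rewrite big1 ?add0r => [|? _]; last by rewrite mulr0.
  by under eq_bigr do rewrite mulrN mulrC; rewrite sumrN; lra.
have := lp_weak_duality_cone x00 ax0 y00 y0a (fun j => l0 _) (fun i => l0 _) (l0 _) col_x col_y.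
move: lb; rewrite !big_sumType /= sum_unit mulr0 addr0.
by under [X in _ + X]eq_bigr do rewrite mulrN mulrC; rewrite sumrN; lra.
Qed.

End LinearInequalities.

Section Hypergraphs.
Variable V : finType.
Implicit Types (t : {set {set V}}) (A B C S : {set V}).

Lemma connect_crossing (T : finType) (r : rel T) (s : {pred T}) x y :
  connect r x y -> x \in s -> y \notin s -> exists a b, [&& a \in s, b \notin s & r a b].
Proof.
case/connectP=> p + ->; elim: p x => [|z p IH] x /=; first by move=> _ xs /negP/(_ xs).
case/andP=> rxz pz xs ys; have [zs|zns] := boolP (z \in s); first exact: IH pz zs ys.
by exists x, z; rewrite xs zns.
Qed.

Lemma hconnectedP t :
  reflect {in t &, forall e f, connect (hadj t) e f} (hconnected t).
Proof.
apply: (iffP forall_inP) => [h e f et ft|h e et].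
  exact: (forall_inP (h e et)).
by apply/forall_inP => f ft; apply: h.
Qed.

Lemma hadj_sym t : symmetric (hadj t).
Proof. by move=> e f; rewrite /hadj andbCA disjoint_sym. Qed.

Lemma connect_hadj_subset t1 t2 :
  t1 \subset t2 -> subrel (connect (hadj t1)) (connect (hadj t2)).
Proof.
move=> t12; apply: connect_sub => e f /and3P [et ft ef]; apply: connect1.
by rewrite /hadj (subsetP t12 _ et) (subsetP t12 _ ft).
Qed.

Lemma hconnected_setU t1 t2 e1 e2 : hconnected t1 -> hconnected t2 ->
  e1 \in t1 -> e2 \in t2 -> ~~ [disjoint e1 & e2] -> hconnected (t1 :|: t2).
Proof.
move=> /hconnectedP h1 /hconnectedP h2 e1t e2t e12; apply/hconnectedP.
have to_e1 e : e \in t1 :|: t2 -> connect (hadj (t1 :|: t2)) e e1.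
  case/setUP => et; first exact: connect_hadj_subset (subsetUl _ _) _ _ (h1 _ _ et e1t).
  apply: connect_trans (connect_hadj_subset (subsetUr _ _) (h2 _ _ et e2t)) _.
  by apply: connect1; rewrite /hadj !inE e1t e2t orbT disjoint_sym.
move=> e f et ft; apply: connect_trans (to_e1 _ et) _.
by rewrite (sym_connect_sym (@hadj_sym _)) to_e1.
Qed.

Lemma connectsS t S S' : S' \subset S -> connects t S -> connects t S'.
Proof.
move=> sS; rewrite /connects; case: ifP => _; first exact/leq_trans/subset_leq_card.
by case/andP=> -> /(subset_trans sS) ->.
Qed.

Lemma card_setU_le1_subset A B : (#|A :|: B| <= 1)%N -> B != set0 -> A \subset B.
Proof.
move=> AB1 /set0Pn [b bB]; apply/setUidPr/eqP; rewrite eq_sym eqEcard subsetUr /=.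
by rewrite (leq_trans AB1) // card_gt0; apply/set0Pn; exists b.
Qed.

Lemma connects_setU t1 t2 A B C : B != set0 -> connects t1 (A :|: B) ->
  connects t2 (B :|: C) -> connects (t1 :|: t2) (A :|: C).
Proof.
move=> B0 c1 c2; have [t10|t1n0] := eqVneq t1 set0.
  move: c1; rewrite t10 set0U /connects eqxx => /card_setU_le1_subset/(_ B0) AB.
  by apply: connectsS c2; rewrite setSU.
have [t20|t2n0] := eqVneq t2 set0.
  move: c2; rewrite t20 setU0 /connects eqxx setUC => /card_setU_le1_subset/(_ B0) CB.
  by apply: connectsS c1; rewrite setUS.
move: c1 c2; rewrite /connects setU_eq0 (negbTE t1n0) (negbTE t2n0) /=.
move=> /andP [h1 s1] /andP [h2 s2]; have [b bB] := set0Pn _ B0.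
have /bigcupP [e1 e1t be1] : b \in \bigcup_(e in t1) e by rewrite (subsetP s1) // inE bB orbT.
have /bigcupP [e2 e2t be2] : b \in \bigcup_(e in t2) e by rewrite (subsetP s2) // inE bB.
rewrite bigcup_setU (hconnected_setU h1 h2 e1t e2t) /=; last first.
  by rewrite -setI_eq0; apply/set0Pn; exists b; rewrite inE be1.
by apply: setUSS; [apply: subset_trans s1 | apply: subset_trans s2]; rewrite ?subsetUl ?subsetUr.
Qed.

Lemma connects_set1 (e S : {set V}) : S \subset e -> connects [set e] S.
Proof.
move=> Se; rewrite /connects big_set1 Se andbT.
have -> /= : ([set e] == set0) = false by apply: negbTE; apply/set0Pn; exists e; rewrite set11.
by apply/hconnectedP => f g /set1P -> /set1P ->; apply: connect0.
Qed.

Lemma connects_minimal_tree t S : connects t S ->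
  exists2 t1 : {set {set V}}, t1 \subset t & minimal_tree S t1.
Proof.
move=> ht; pose P t' := (t' \subset t) && connects t' S.
have Pt : P t by rewrite /P subxx.
have [t1 /andP [t1t ht1] t1min] := arg_minnP (fun t' : {set {set V}} => #|t'|) Pt.
exists t1 => //; rewrite /minimal_tree ht1; apply/forallP => t'; apply/implyP => t't1.
apply/negP => ht'; have := t1min t'; rewrite /P (subset_trans (proper_sub t't1) t1t) ht'.
by move=> /(_ isT); rewrite leqNgt proper_card.
Qed.

Definition hspanning (E : {set {set V}}) :=
  forall S : {set V}, exists t : {set {set V}}, (t \subset E) && connects t S.

Lemma hspanning_setT : hspanning [set: {set V}].
Proof. by move=> S; exists [set setT]; rewrite subsetT connects_set1 ?subsetT. Qed.

End Hypergraphs.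

Section Diversities.
Variables (V : finType) (R : realType).
Implicit Types (delta : {set V} -> R) (t : {set {set V}}) (A B S : {set V}).

Lemma diversity_ge0 delta A : diversity delta -> 0 <= delta A.
Proof. by case. Qed.

Lemma diversity_small delta A : diversity delta -> (#|A| <= 1)%N -> delta A = 0.
Proof. by case=> _ + _; apply. Qed.

Lemma diversity_triangle delta A B C : diversity delta -> B != set0 ->
  delta (A :|: C) <= delta (A :|: B) + delta (B :|: C).
Proof. by case=> _ _; apply. Qed.

Lemma diversity_setU1 delta A x : diversity delta -> delta A <= delta (x |: A).
Proof.
move=> hd; have x0 : [set x] != set0 by apply/set0Pn; exists x; rewrite set11.
have := diversity_triangle A set0 hd x0.
by rewrite !setU0 setUC (diversity_small hd (A := [set x])) ?cards1 ?addr0.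
Qed.

Lemma diversity_mono delta A B : diversity delta -> A \subset B -> delta A <= delta B.
Proof.
move=> hd; move: {2}#|B :\: A| (erefl #|B :\: A|) => n.
elim: n B => [|n IH] B cardBA sAB.
  have -> // : B = A.
  by apply/eqP; rewrite eqEsubset sAB andbT -setD_eq0 -cards_eq0 cardBA.
have [x xBA] : exists x, x \in B :\: A by apply/set0Pn; rewrite -card_gt0 cardBA.
have [xB xnA] := setDP xBA.
have sABx : A \subset B :\ x by rewrite subsetD1 sAB xnA.
have cardBxA : #|B :\ x :\: A| = n.
  by move: cardBA; rewrite (cardsD1 x) xBA setDDl setUC -setDDl => -[].
apply: le_trans (IH _ cardBxA sABx) _.
by rewrite -{2}(setD1K xB); apply: diversity_setU1.
Qed.

Lemma diversity_setU delta A B : diversity delta -> A :&: B != set0 ->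
  delta (A :|: B) <= delta A + delta B.
Proof.
move=> hd AB0; have := diversity_triangle A B hd AB0.
by rewrite (setUidPl (subsetIl A B)) (setUidPr (subsetIr A B)).
Qed.

Lemma diversity_bigcup_le delta t : diversity delta -> hconnected t ->
  delta (\bigcup_(e in t) e) <= \sum_(e in t) delta e.
Proof.
move=> hd /hconnectedP ht; have [->|[e1 e1t]] := set_0Vmem t.
  by rewrite !big_set0 (diversity_small hd) ?cards0.
(* A maximal sub-collection through [e1] satisfying the bound can absorb
   any hyperedge of [t] meeting it, so by connectivity it is all of [t]. *)
pose good (s : {set {set V}}) := [&& s \subset t, e1 \in s &
  delta (\bigcup_(e in s) e) <= \sum_(e in s) delta e].
have good1 : good [set e1] by rewrite /good sub1set e1t set11 !big_set1 lexx.
have [s /and3P [st e1s hs] smax] := arg_maxnP (fun s : {set {set V}} => #|s|) good1.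
suff -> : t = s by [].
apply/eqP; rewrite eqEsubset st andbT; apply/subsetP => g gt.
apply/negPn/negP => gNs.
have [a [b /and3P [aS bNs /and3P [_ bt ab]]]] := connect_crossing (ht _ _ e1t gt) e1s gNs.
have : good (b |: s).
  have bs0 : b :&: \bigcup_(e in s) e != set0.
    move: ab; rewrite -setI_eq0 => /set0Pn [x]; rewrite inE => /andP [xa xb].
    by apply/set0Pn; exists x; rewrite inE xb; apply/bigcupP; exists a.
  rewrite /good subUset sub1set bt st in_setU1 e1s orbT /= !big_setU1 //=.
  by apply: le_trans (diversity_setU hd bs0) _; rewrite lerD2l.
by move/smax; rewrite cardsU1 bNs /= add1n ltnn.
Qed.

Lemma diversity_le_sum_connects delta t S : diversity delta -> connects t S ->
  delta S <= \sum_(e in t) delta e.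
Proof.
move=> hd; rewrite /connects; case: eqP => [-> hS|_ /andP [ht sS]].
  by rewrite big_set0 (diversity_small hd).
exact: le_trans (diversity_mono hd sS) (diversity_bigcup_le hd ht).
Qed.

End Diversities.

Lemma supported_on_hspanning (V : finType) (R : realType) (E : {set {set V}})
    (delta : {set V} -> R) :
  supported_on E delta -> hspanning E.
Proof. by case=> w [_ hw] S; have [[t ht _] _] := hw S; exists t. Qed.

Section SteinerDiversity.
Variables (V : finType) (R : realType) (E : {set {set V}}) (w : {set V} -> R).
Hypotheses (w_ge0 : forall e, e \in E -> 0 <= w e) (spanE : hspanning E).
Implicit Types (t : {set {set V}}) (S : {set V}).

Definition steiner_cost t := \sum_(e in t) w e.

Definition steiner S : R :=
  steiner_cost (Order.arg_min (xchoose (spanE S))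
                  (fun t => (t \subset E) && connects t S) steiner_cost).

Lemma steinerP S : exists2 t : {set {set V}}, (t \subset E) && connects t S &
  steiner S = steiner_cost t /\
  forall t' : {set {set V}}, t' \subset E -> connects t' S -> steiner S <= steiner_cost t'.
Proof.
rewrite /steiner; case: (arg_minP steiner_cost (xchooseP (spanE S))) => t ht tmin.
by exists t => //; split=> // t' t'E ht'; apply: tmin; rewrite t'E.
Qed.

Lemma steiner_cost_ge0 t : t \subset E -> 0 <= steiner_cost t.
Proof. by move=> tE; apply: sumr_ge0 => e et; apply: w_ge0 (subsetP tE _ et). Qed.

Lemma steiner_cost_subset t1 t : t1 \subset t -> t \subset E ->
  steiner_cost t1 <= steiner_cost t.
Proof.
move=> t1t tE; rewrite /steiner_cost (big_setID t1 (A := t)) /= (setIidPr t1t) lerDl.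
apply: sumr_ge0 => e /setDP [et _]; exact: w_ge0 (subsetP tE _ et).
Qed.

Lemma steiner_cost_setU t1 t2 : t2 \subset E ->
  steiner_cost (t1 :|: t2) <= steiner_cost t1 + steiner_cost t2.
Proof.
move=> t2E; rewrite /steiner_cost (big_setID t1 (A := t1 :|: t2)) /=.
rewrite setUK setDUl setDv set0U lerD2l (big_setID t1 (A := t2)) /= lerDr.
apply: sumr_ge0 => e /setIP [et _]; exact: w_ge0 (subsetP t2E _ et).
Qed.

Lemma steiner_diversity : diversity steiner.
Proof.
have steiner_ge0 S : 0 <= steiner S.
  by have [t /andP [tE _] [-> _]] := steinerP S; apply: steiner_cost_ge0.
split=> // [A cardA|A B C B0].
  apply/eqP; rewrite eq_le steiner_ge0 andbT.
  have [_ _ [_ /(_ set0 (sub0set _))]] := steinerP A.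
  by rewrite /connects eqxx cardA /steiner_cost big_set0; apply.
have [t1 /andP [t1E c1] [-> _]] := steinerP (A :|: B).
have [t2 /andP [t2E c2] [-> _]] := steinerP (B :|: C).
have [_ _ [_ tmin]] := steinerP (A :|: C).
apply: le_trans (steiner_cost_setU t1 t2E).
by apply: tmin; [rewrite subUset t1E | exact: connects_setU B0 c1 c2].
Qed.

Lemma steiner_supported : supported_on E steiner.
Proof.
exists w; split=> // A; have [t ht [tA tmin]] := steinerP A.
by split; first exists t.
Qed.

Lemma steiner_le_weight e : e \in E -> steiner e <= w e.
Proof.
move=> eE; have [_ _ [_ tmin]] := steinerP e.
by have := tmin [set e]; rewrite /steiner_cost big_set1 sub1set; apply=> //; apply: connects_set1.
Qed.

Lemma steiner_max delta : diversity delta -> (forall e, e \in E -> delta e <= w e) ->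
  forall S, delta S <= steiner S.
Proof.
move=> hd le_w S; have [t /andP [tE ht] [-> _]] := steinerP S.
apply: le_trans (diversity_le_sum_connects hd ht) _.
by apply: ler_sum => e et; apply: le_w (subsetP tE _ et).
Qed.

Lemma steiner_ge_minimal_trees S (u : R) :
  (forall t, t \subset E -> minimal_tree S t -> u <= steiner_cost t) -> u <= steiner S.
Proof.
move=> u_le; have [t /andP [tE ht] [-> _]] := steinerP S.
have [t1 t1t mt1] := connects_minimal_tree ht.
exact: le_trans (u_le _ (subset_trans t1t tE) mt1) (steiner_cost_subset t1t tE).
Qed.

End SteinerDiversity.

Lemma sumr_trees_exchange (V : finType) (R : comPzRingType)
    (P : {set V} -> {set {set V}} -> bool) (z : {set {set V}} -> {set V} -> R)
    (g : {set V} -> R) :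
  \sum_S \sum_(t | P S t) z t S * \sum_(e in t) g e =
  \sum_e g e * \sum_S \sum_(t | P S t && (e \in t)) z t S.
Proof.
under eq_bigr do under eq_bigr do rewrite mulr_sumr big_mkcond.
under eq_bigr do rewrite exchange_big /=.
rewrite exchange_big /=; apply: eq_bigr => e _; rewrite mulr_sumr.
apply: eq_bigr => S _; rewrite mulr_sumr big_mkcondr /=; apply: eq_bigr => t _.
by case: (e \in t); rewrite ?mulr0 // mulrC.
Qed.

Section HypergraphSteinerPacking.
Variables (V : finType) (R : realType) (C D : {set V} -> R).
Hypotheses (C_ge0 : forall e, 0 <= C e) (D_ge0 : forall S, 0 <= D S).

Lemma HSP_weak_duality f delta : diversity delta -> HSP_feasible C D f ->
  f * dotp D delta <= dotp C delta.
Proof.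
move=> hd [z [z0 zcap zdem]]; rewrite /dotp mulr_sumr.
apply: (@le_trans _ _ (\sum_S \sum_(t | minimal_tree S t) z t S * \sum_(e in t) delta e)).
  apply: ler_sum => S _; rewrite mulrA -zdem mulr_suml; apply: ler_sum => t /andP [ht _].
  by apply: ler_wpM2l => //; apply: diversity_le_sum_connects.
rewrite sumr_trees_exchange; apply: ler_sum => e _; rewrite mulrC.
by apply: ler_wpM2r; [apply: diversity_ge0 | apply: zcap].
Qed.

Lemma HSP_feasible_of_oversupply f (z : {set {set V}} -> {set V} -> R) :
  0 <= f -> (forall t S, 0 <= z t S) ->
  (forall e, \sum_S \sum_(t | minimal_tree S t && (e \in t)) z t S <= C e) ->
  (forall S, f * D S <= \sum_(t | minimal_tree S t) z t S) ->
  HSP_feasible C D f.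
Proof.
move=> f0 z0 zcap zdem.
(* scale the flow for [S] down to exactly [f * D S]; when there is no flow,
   [x / 0 = 0] makes the scaling factor [0] *)
pose r S := f * D S / \sum_(t | minimal_tree S t) z t S.
have fD0 S : 0 <= f * D S by apply: mulr_ge0.
have r_ge0 S : 0 <= r S by apply: divr_ge0 (fD0 S) (le_trans (fD0 S) (zdem S)).
have r_le1 S : r S <= 1.
  rewrite /r; have [->|sum0] := eqVneq (\sum_(t | minimal_tree S t) z t S) 0.
    by rewrite invr0 mulr0.
  by rewrite ler_pdivrMr ?mul1r // lt_def sum0 (le_trans (fD0 S) (zdem S)).
exists (fun t S => r S * z t S); split=> [t S|e|S].
- exact: mulr_ge0.
- apply: le_trans (zcap e); apply: ler_sum => S _; apply: ler_sum => t _.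
  exact: ler_piMl.
- rewrite -mulr_sumr /r; have [sum0|sum0] := eqVneq (\sum_(t | minimal_tree S t) z t S) 0.
    by rewrite sum0 mulr0; apply/eqP; rewrite eq_le fD0 -sum0 zdem.
  by rewrite divfK.
Qed.

(* The program as [max c.x s.t. a x <= b, x >= 0]: variable [inl tt] is [f],
   variable [inr (S, t)] is the flow [z t S]; row [inl e] is the capacity of
   [e], row [inr S] is [f * D S <= sum of the flows for S]. *)
Definition hsp_a (j : {set V} + {set V}) (i : unit + {set V} * {set {set V}}) : R :=
  match j, i with
  | inl e, inr (U, t) => if minimal_tree U t && (e \in t) then 1 else 0
  | inr U, inl _ => D U
  | inr U, inr (U', t) => if (U' == U) && minimal_tree U' t then -1 else 0
  | inl _, inl _ => 0
  end.

Definition hsp_b (j : {set V} + {set V}) : R :=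
  match j with inl e => C e | inr _ => 0 end.

Definition hsp_c (i : unit + {set V} * {set {set V}}) : R :=
  match i with inl _ => 1 | inr _ => 0 end.

Lemma hsp_row_capacity x e : \sum_i hsp_a (inl e) i * x i =
  \sum_S \sum_(t | minimal_tree S t && (e \in t)) x (inr (S, t)).
Proof.
rewrite big_sumType /= sum_unit mul0r add0r sum_pair; apply: eq_bigr => S _.
by rewrite [RHS]big_mkcond; apply: eq_bigr => t _; case: ifP; rewrite ?mul1r ?mul0r.
Qed.

Lemma hsp_row_demand x S : \sum_i hsp_a (inr S) i * x i =
  D S * x (inl tt) - \sum_(t | minimal_tree S t) x (inr (S, t)).
Proof.
rewrite big_sumType /= sum_unit sum_pair (bigD1 S) //= [X in _ + (_ + X)]big1.
  rewrite addr0 -sumrN; congr (_ + _); rewrite [RHS]big_mkcond; apply: eq_bigr => t _.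
  by rewrite eqxx /=; case: ifP; rewrite ?mulN1r ?mul0r ?oppr0.
by move=> U /negbTE US; apply: big1 => t _; rewrite US mul0r.
Qed.

Lemma hsp_col_flow y : \sum_j y j * hsp_a j (inl tt) = \sum_S y (inr S) * D S.
Proof. by rewrite big_sumType /= big1 ?add0r // => e _; rewrite mulr0. Qed.

Lemma hsp_col_tree y S t : \sum_j y j * hsp_a j (inr (S, t)) =
  if minimal_tree S t then \sum_(e in t) y (inl e) - y (inr S) else 0.
Proof.
rewrite big_sumType /=; case: (minimal_tree S t) => /=; last first.
  by rewrite !big1 ?addr0 // => ? _; rewrite ?andbF mulr0.
congr (_ + _).
  by rewrite [RHS]big_mkcond; apply: eq_bigr => e _; case: (e \in t); rewrite ?mulr1 ?mulr0.
by under eq_bigr do rewrite andbT eq_sym; rewrite sumr_delta_r mulrN1.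
Qed.

Lemma hsp_objective_primal x : \sum_i hsp_c i * x i = x (inl tt).
Proof. by rewrite big_sumType /= sum_unit mul1r big1 ?addr0 // => ? _; rewrite mul0r. Qed.

Lemma hsp_objective_dual y : \sum_j y j * hsp_b j = \sum_e C e * y (inl e).
Proof.
rewrite big_sumType /= [X in _ + X]big1 ?addr0 => [|? _]; last by rewrite mulr0.
by apply: eq_bigr => e _; rewrite mulrC.
Qed.

Lemma hsp_primal_feasible :
  exists x, (forall i, 0 <= x i) /\ forall j, \sum_i hsp_a j i * x i <= hsp_b j.
Proof.
exists (fun _ => 0); split=> // j; rewrite big1 => [|i _]; last by rewrite mulr0.
by case: j.
Qed.

Lemma hsp_dual_of_diversity delta : diversity delta -> 0 < dotp D delta ->
  exists y, (forall j, 0 <= y j) /\ forall i, hsp_c i <= \sum_j y j * hsp_a j i.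
Proof.
move=> hd Dpos.
exists (fun j => match j with inl A | inr A => delta A / dotp D delta end); split.
  by case=> A; apply: divr_ge0 (diversity_ge0 _ hd) (ltW Dpos).
case=> [[]|[S t]] /=.
  rewrite hsp_col_flow -(divff (lt0r_neq0 Dpos)) /dotp mulr_suml le_eqVlt; apply/orP; left.
  by apply/eqP; apply: eq_bigr => S _; rewrite [RHS]mulrC mulrA.
rewrite hsp_col_tree; case: ifP => // /andP [ht _].
rewrite subr_ge0 -mulr_suml ler_wpM2r ?invr_ge0 ?(ltW Dpos) //.
exact: diversity_le_sum_connects.
Qed.

Lemma HSP_feasible_of_lp x : (forall i, 0 <= x i) ->
  (forall j, \sum_i hsp_a j i * x i <= hsp_b j) -> HSP_feasible C D (x (inl tt)).
Proof.
move=> x0 Ax; apply: (@HSP_feasible_of_oversupply _ (fun t S => x (inr (S, t)))) => // [e|S].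
  by rewrite -hsp_row_capacity; apply: (Ax (inl e)).
by have := Ax (inr S); rewrite hsp_row_demand /= subr_le0 mulrC.
Qed.

Lemma hsp_dual_diversity y : (forall j, 0 <= y j) ->
  (forall i, hsp_c i <= \sum_j y j * hsp_a j i) ->
  exists delta, [/\ diversity delta, 1 <= dotp D delta &
                    dotp C delta <= \sum_j y j * hsp_b j].
Proof.
move=> y0 yA; have w_ge0 e : e \in [set: {set V}] -> 0 <= y (inl e) by move=> _; apply: y0.
exists (steiner (fun e => y (inl e)) (@hspanning_setT V)); split.
- exact: steiner_diversity.
- apply: le_trans (yA (inl tt)) _; rewrite hsp_col_flow; apply: ler_sum => S _.
  rewrite mulrC ler_wpM2l //; apply: (steiner_ge_minimal_trees w_ge0) => t _ mt.
  by have := yA (inr (S, t)); rewrite hsp_col_tree mt subr_ge0.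
- rewrite hsp_objective_dual; apply: ler_sum => e _; rewrite ler_wpM2l //.
  by apply: steiner_le_weight; rewrite in_setT.
Qed.

Lemma HSP_strong_duality delta0 : diversity delta0 -> 0 < dotp D delta0 ->
  exists f (delta : {set V} -> R), [/\ HSP_feasible C D f, diversity delta,
    0 < dotp D delta & dotp C delta <= f * dotp D delta].
Proof.
move=> hd0 D0; have [x [y [x0 Ax y0 yA yb_le_cx]]] :=
  lp_duality hsp_primal_feasible (hsp_dual_of_diversity hd0 D0).
have [delta [hd Ddelta Cdelta]] := hsp_dual_diversity y0 yA.
rewrite hsp_objective_primal in yb_le_cx.
have Cf : dotp C delta <= x (inl tt) := le_trans Cdelta yb_le_cx.
exists (x (inl tt)), delta; split=> //; first exact: HSP_feasible_of_lp.
  exact: lt_le_trans ltr01 Ddelta.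
by apply: le_trans Cf _; rewrite ler_peMr.
Qed.

Lemma steiner_on_capacity_support delta : hspanning [set e | 0 < C e] -> diversity delta ->
  exists d, [/\ diversity d, supported_on [set e | 0 < C e] d,
                dotp C d <= dotp C delta & dotp D delta <= dotp D d].
Proof.
move=> span hd; have w_ge0 e : e \in [set e | 0 < C e] -> 0 <= delta e.
  by move=> _; apply: diversity_ge0.
exists (steiner delta span); split.
- exact: steiner_diversity.
- exact: steiner_supported.
- apply: ler_sum => e _; have := C_ge0 e; rewrite le_eqVlt => /orP [/eqP <-|Ce].
    by rewrite !mul0r.
  by rewrite ler_wpM2l //; apply: steiner_le_weight; rewrite inE.
- by apply: ler_sum => S _; rewrite ler_wpM2l //; apply: steiner_max.
Qed.

End HypergraphSteinerPacking.

Theorem proposition16 (V : finType) (R : realType) (C D : {set V} -> R)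
    (hC : forall A, 0 <= C A) (hD : forall S, 0 <= D S)
    (hex : exists delta, diversity delta /\ 0 < dotp D delta) :
  exists m : R,
    [/\ is_MaxHSP C D m,
        (forall delta, diversity delta -> 0 < dotp D delta ->
           m <= dotp C delta / dotp D delta),
        (exists delta, [/\ diversity delta, 0 < dotp D delta &
                           dotp C delta / dotp D delta = m]) &
        ((exists delta : {set V} -> R, supported_on [set e | 0 < C e] delta) ->
         exists delta, [/\ diversity delta, supported_on [set e | 0 < C e] delta,
                           0 < dotp D delta & dotp C delta / dotp D delta = m])].
Proof.
have [d0 [hd0 Dd0]] := hex.
have [f [ds [feas hds Dds Cds]]] := HSP_strong_duality hC hD hd0 Dd0.
have f_ge0 : 0 <= f.
  rewrite -(pmulr_lge0 _ Dds); apply: le_trans Cds.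
  by apply: sumr_ge0 => e _; rewrite mulr_ge0 ?(diversity_ge0 _ hds).
have ratio delta : diversity delta -> 0 < dotp D delta ->
    dotp C delta <= f * dotp D delta -> dotp C delta / dotp D delta = f.
  move=> hd Dpos Cle; apply/eqP; rewrite eq_le ler_pdivrMr // Cle ler_pdivlMr //.
  exact: HSP_weak_duality.
exists f; split.
- split=> // g /(HSP_weak_duality hds) gDC.
  by rewrite -(ler_pM2r Dds); apply: le_trans Cds.
- by move=> delta hd Dpos; rewrite ler_pdivlMr //; apply: HSP_weak_duality.
- by exists ds; split=> //; apply: ratio.
case=> _ /supported_on_hspanning span.
have [d [hd sd Cd Dd]] := steiner_on_capacity_support hC hD span hds.
have Dpos : 0 < dotp D d := lt_le_trans Dds Dd.
exists d; split=> //; apply: ratio => //.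
by apply: le_trans Cd (le_trans Cds _); rewrite ler_wpM2l.
Qed.
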